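(* Let $(S_n)_{n\ge0}$ be defined by $S_0=3$, $S_1=1$, $S_2=3$ and $S_{n+1}=S_n+S_{n-1}+S_{n-2}$ for $n\ge 2$. Let $\alpha,\beta,\gamma$ be the roots of $x^3-x^2-x-1=0$ and $C_n=\alpha^n\beta^n+\alpha^n\gamma^n+\beta^n\gamma^n$ for $n\ge0$. Then for all integers $n\ge 0$ and $m\ge 2$, $$S_nS_{nm}=S_{n(m+1)}+S_{n(m-1)}C_n-S_{n(m-2)}.$$
   Context: $S_n$ is the generalized Lucas (generalized Tribonacci) sequence. *)

From mathcomp Require Import all_boot all_order all_algebra all_field.
Set Implicit Arguments. Unset Strict Implicit. Unset Printing Implicit Defensive.
Import Order.TTheory GRing.Theory Num.Theory.

Fixpoint Sseq (n : nat) : nat :=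
  match n with
  | 0 => 3
  | 1 => 1
  | 2 => 3
  | S ((S (S k as k1)) as k2) => Sseq k2 + Sseq k1 + Sseq k
  end.

Local Open Scope ring_scope.

Definition Cseq (a b c : algC) (n : nat) : algC :=
  a ^+ n * b ^+ n + a ^+ n * c ^+ n + b ^+ n * c ^+ n.
Example Sseq_check : [:: Sseq 0; Sseq 1; Sseq 2; Sseq 3; Sseq 4; Sseq 5] = [:: 3; 1; 3; 7; 11; 21]%N.
Proof. reflexivity. Qed.

From mathcomp Require Import all_boot all_order all_algebra all_field.
From mathcomp Require Import ring.

Set Implicit Arguments.
Unset Strict Implicit.
Unset Printing Implicit Defensive.
Import GRing.Theory.
Local Open Scope ring_scope.

(* S_k is the power sum a^k + b^k + c^k of the roots of x^3 - x^2 - x - 1,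
   because Newton's identity for three variables,
     p_{k+3} = e1 p_{k+2} - e2 p_{k+1} + e3 p_k,
   becomes the recurrence of S once Vieta gives e1 = 1, e2 = -1, e3 = 1.
   Applied instead to a^n, b^n, c^n, for which e1 = S_n, e2 = C_n and
   e3 = (abc)^n = 1, the same identity is the theorem with m = j + 2. *)

Definition pow_sum3 (R : comPzRingType) (x y z : R) (k : nat) : R :=
  x ^+ k + y ^+ k + z ^+ k.

Section PowerSums.

Variables (R : comPzRingType) (x y z : R).

Lemma pow_sum3_newton k :
  pow_sum3 x y z k.+3 =
    (x + y + z) * pow_sum3 x y z k.+2 - (x * y + x * z + y * z) * pow_sum3 x y z k.+1
    + x * y * z * pow_sum3 x y z k.
Proof. by rewrite /pow_sum3 !exprS; ring. Qed.

Lemma pow_sum3_exprM n k :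
  pow_sum3 (x ^+ n) (y ^+ n) (z ^+ n) k = pow_sum3 x y z (n * k).
Proof. by rewrite /pow_sum3 !exprM. Qed.

Lemma Sseq_pow_sum3 :
  x + y + z = 1 -> x * y + x * z + y * z = -1 -> x * y * z = 1 ->
  forall k, (Sseq k)%:R = pow_sum3 x y z k.
Proof.
move=> e1 e2 e3; elim/ltn_ind => -[|[|[|k]]] IH.
- by rewrite /pow_sum3 !expr0 /=; ring.
- by rewrite /pow_sum3 !expr1 e1.
- have -> : pow_sum3 x y z 2 = (x + y + z) ^+ 2 - 2 * (x * y + x * z + y * z).
    by rewrite /pow_sum3; ring.
  by rewrite e1 e2 /=; ring.
- have -> : Sseq k.+3 = (Sseq k.+2 + Sseq k.+1 + Sseq k)%N by [].
  rewrite pow_sum3_newton e1 e2 e3 !natrD !IH ?ltnS ?leqnSn ?(leqW (leqnSn k)) //.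
  by ring.
Qed.

End PowerSums.

Lemma prod_XsubC3 (R : comNzRingType) (a b c : R) :
  ('X - a%:P) * ('X - b%:P) * ('X - c%:P) =
    'X^3 - (a + b + c)%:P * 'X^2 + (a * b + a * c + b * c)%:P * 'X - (a * b * c)%:P.
Proof. by rewrite !rmorphD !rmorphM /=; ring. Qed.

Lemma tribonacci_roots_sym (R : comNzRingType) (a b c : R) :
  'X^3 - 'X^2 - 'X - 1 = ('X - a%:P) * ('X - b%:P) * ('X - c%:P) ->
  [/\ a + b + c = 1, a * b + a * c + b * c = -1 & a * b * c = 1].
Proof.
rewrite prod_XsubC3 => eqp.
have coef i := congr1 (fun p : {poly R} => p`_i) eqp.
move: (coef 0%N) (coef 1%N) (coef 2%N); rewrite !coefE /=.
rewrite !(mulr0, mulr1, subr0, sub0r, add0r, addr0, oppr0).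
move=> /oppr_inj e3 e2 /oppr_inj e1.
by split; [rewrite -e1 | rewrite -e2 | rewrite -e3].
Qed.

Theorem mainTheorem6 (a b c : algC) :
  ('X^3 - 'X^2 - 'X - 1 : {poly algC}) = ('X - a%:P) * ('X - b%:P) * ('X - c%:P) ->
  forall n m : nat, (2 <= m)%N ->
    (Sseq n)%:R * (Sseq (n * m))%:R =
      (Sseq (n * (m + 1)))%:R + (Sseq (n * (m - 1)))%:R * Cseq a b c n
      - (Sseq (n * (m - 2)))%:R :> algC.
Proof.
move=> /tribonacci_roots_sym[e1 e2 e3] n [|[|j]] // _.
rewrite addn1 subn1 subn2 /= !(Sseq_pow_sum3 e1 e2 e3) -!pow_sum3_exprM.
have e3n : a ^+ n * b ^+ n * c ^+ n = 1 by rewrite -!exprMn e3 expr1n.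
rewrite pow_sum3_newton e3n [pow_sum3 a b c n]/pow_sum3 /Cseq.
by ring.
Qed.
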